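(* For integers $m\ge1$, $1\le i\le m$ and $n\ge0$, $$\sum_{\lambda\vdash n}X_{m,i}(\lambda)=\sum_{k\ge1}p(n-k)\sum_{d\mid k}\left\lfloor\frac{d+m-i}{m}\right\rfloor,$$ where the left sum is over all partitions $\lambda$ of $n$, $p$ is the partition function, and $p(N)=0$ for $N<0$.
   Context: For a partition $\lambda:\ n=\lambda_1+\dots+\lambda_k$ with $\lambda_1\ge\dots\ge\lambda_k\ge1$, $X_{m,i}(\lambda)=\sum_{j\equiv i\pmod m}\lambda_j$, the sum of the parts whose index is congruent to $i$ modulo $m$. *)

From mathcomp Require Import all_boot.
Set Implicit Arguments. Unset Strict Implicit. Unset Printing Implicit Defensive.

(* A partition of n is encoded as its sequence of parts padded with zeros to
   length n: l : {ffun 'I_n -> 'I_n.+1}, l 0 >= l 1 >= ... >= l (n-1) >= 0,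
   with sum n.  The nonzero entries are exactly the parts lambda_1 >= ... >= lambda_k
   (k <= n), so this is in bijection with partitions of n.  Index j : 'I_n
   stands for the (j+1)-th part. *)
Definition is_partition (n : nat) (l : {ffun 'I_n -> 'I_n.+1}) : bool :=
  [forall i : 'I_n, forall j : 'I_n, (i <= j) ==> (l j <= l i)] &&
  (\sum_(j < n) (l j : nat) == n).

Definition partitions (n : nat) : {set {ffun 'I_n -> 'I_n.+1}} :=
  [set l | is_partition l].

Definition npart (N : nat) : nat := #|partitions N|.

Definition Xmi (m i n : nat) (l : {ffun 'I_n -> 'I_n.+1}) : nat :=
  \sum_(j < n | j.+1 == i %[mod m]) (l j : nat).

From mathcomp Require Import all_boot zify.
Set Implicit Arguments. Unset Strict Implicit. Unset Printing Implicit Defensive.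

(* The part lambda_(j+1) telescopes into the gaps lambda_d - lambda_(d+1), d > j,
   and such a gap is the number of r >= 1 with lambda_(d+1) + r <= lambda_d.
   Removing r from each of the first d parts maps the partitions of n with that
   property bijectively onto the partitions of n - r d, so summing lambda_(j+1)
   over all partitions gives sum_k p(n - k) #{d | k : d > j}.  Summing over the
   j with j + 1 = i (mod m), each divisor d of k is counted once for every such
   j < d, that is floor((d + m - i) / m) times. *)

Lemma sum_nat_zero_tail (g : nat -> nat) a N n : a <= N <= n ->
  (forall k, N <= k < n -> g k = 0) -> \sum_(a <= k < n) g k = \sum_(a <= k < N) g k.
Proof.
case/andP=> le_aN le_Nn g0; rewrite (big_cat_nat le_aN le_Nn) /=.
by rewrite [X in _ + X]big1_seq ?addn0 // => k /andP[_]; rewrite mem_index_iota => /g0.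
Qed.

Lemma sum_nat_leq_indicator x n : x <= n -> \sum_(1 <= r < n.+1) (r <= x) = x.
Proof.
move=> le_xn; rewrite (@sum_nat_zero_tail _ _ x.+1) ?ltnS ?le_xn // => [|k /andP[]].
  rewrite (eq_big_nat _ _ (F2 := fun=> 1)) ?sum_nat_const_nat ?subn1 ?muln1 //.
  by move=> k /andP[_]; rewrite ltnS => ->.
by rewrite ltnNge => /negbTE->.
Qed.

Lemma sum_nat_eq_indicator a b x (F : nat -> nat) :
  \sum_(a <= k < b) (k == x) * F k = (a <= x < b) * F x.
Proof.
transitivity (\sum_(a <= k < b | k == x) F k); last first.
  by rewrite big_nat1_eq; case: (a <= x < b); rewrite ?mul1n ?mul0n.
by rewrite [RHS]big_mkcond; apply: eq_bigr => k _; case: eqP; rewrite ?mul1n ?mul0n.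
Qed.

Lemma sum_nat_leq_const d r n : d < n -> \sum_(0 <= k < n) (k <= d) * r = d.+1 * r.
Proof.
move=> lt_dn; rewrite (@sum_nat_zero_tail _ _ d.+1) ?lt_dn // => [|k /andP[lt_dk _]].
  rewrite (eq_big_nat _ _ (F2 := fun=> r)) ?sum_nat_const_nat ?subn0 //.
  by move=> k /andP[_]; rewrite ltnS => ->; rewrite mul1n.
by rewrite leqNgt lt_dk.
Qed.

Section Nonincreasing.
Variable g : nat -> nat.
Hypothesis g_nonincr : {homo g : a b /~ a <= b}.

Lemma telescope_sumn_nonincr j b : j <= b ->
  \sum_(j <= d < b) (g d - g d.+1) = g j - g b.
Proof.
elim: b => [|b IHb]; first by rewrite leqn0 => /eqP->; rewrite big_geq ?subnn.
rewrite leq_eqVlt => /predU1P[-> | ]; first by rewrite big_geq ?subnn.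
rewrite ltnS => le_jb; rewrite big_nat_recr //= IHb //.
by have := g_nonincr le_jb; have := g_nonincr (leqnSn b); lia.
Qed.

Lemma mulS_leq_sum_nonincr n k : k < n -> k.+1 * g k <= \sum_(0 <= j < n) g j.
Proof.
move=> lt_kn; rewrite (big_cat_nat (leq0n k.+1) lt_kn) /=.
apply: leq_trans (leq_addr _ _).
rewrite -[k.+1]subn0 -sum_nat_const_nat big_nat_cond [X in _ <= X]big_nat_cond.
by apply: leq_sum => j /andP[/andP[_ le_jk] _]; apply: g_nonincr.
Qed.

End Nonincreasing.

Section PaddedParts.
Variable n : nat.
Implicit Types (l : {ffun 'I_n -> 'I_n.+1}) (f : nat -> nat).

(* [part l j] is the paper's lambda_(j+1): parts are indexed from 0 here. *)
Definition part l k : nat := oapp (fun x : 'I_n => nat_of_ord (l x)) 0 (insub k).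

Definition ffun_of_parts f : {ffun 'I_n -> 'I_n.+1} := [ffun x : 'I_n => inord (f x)].

Lemma part_ord l (x : 'I_n) : part l x = l x.
Proof. by rewrite /part valK. Qed.

Lemma part_ge l k : n <= k -> part l k = 0.
Proof. by move=> le_nk; rewrite /part insubN // -leqNgt. Qed.

Lemma part_leq l k : part l k <= n.
Proof.
case: (ltnP k n) => [lt_kn | /part_ge -> //].
by rewrite -[k]/(nat_of_ord (Ordinal lt_kn)) part_ord -ltnS.
Qed.

Lemma part_inj l1 l2 : part l1 =1 part l2 -> l1 = l2.
Proof. by move=> eq12; apply/ffunP => x; apply/val_inj; rewrite /= -!part_ord. Qed.

Lemma part_of_parts f k : k < n -> f k <= n -> part (ffun_of_parts f) k = f k.
Proof.
move=> lt_kn le_fk_n.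
by rewrite -[k]/(nat_of_ord (Ordinal lt_kn)) part_ord ffunE inordK.
Qed.

Lemma partitionsP l :
  reflect ({homo part l : a b /~ a <= b} /\ \sum_(0 <= k < n) part l k = n)
          (l \in partitions n).
Proof.
rewrite inE /is_partition big_mkord.
under [X in _ && (X == _)]eq_bigr => j _ do rewrite -part_ord.
apply: (iffP andP) => [[/forallP l_nonincr /eqP l_sum] | [l_nonincr l_sum]].
  split=> // b a le_ab; case: (ltnP b n) => [lt_bn | /part_ge -> //].
  have lt_an := leq_ltn_trans le_ab lt_bn.
  move: (l_nonincr (Ordinal lt_an)) => /forallP /(_ (Ordinal lt_bn)) /implyP /(_ le_ab).
  by rewrite -!part_ord.
split; last by apply/eqP.
by apply/forallP => x; apply/forallP => y; apply/implyP => le_xy; rewrite -!part_ord l_nonincr.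
Qed.

Lemma partitions_of_nonincr f m : {homo f : a b /~ a <= b} -> n <= m ->
    (forall k, m <= k -> f k = 0) -> \sum_(0 <= k < m) f k = n ->
  exists2 l, l \in partitions n & part l =1 f.
Proof.
move=> f_nonincr le_nm f0 f_sum.
have f_small k : n <= k -> f k = 0.
  case: (ltnP k m) => [lt_km le_nk | /f0 //].
  by have := mulS_leq_sum_nonincr f_nonincr lt_km; rewrite f_sum; nia.
have f_leq k : f k <= n.
  case: (ltnP k m) => [lt_km | /f0 -> //].
  by have := mulS_leq_sum_nonincr f_nonincr lt_km; rewrite f_sum; nia.
have part_f : part (ffun_of_parts f) =1 f.
  move=> k; case: (ltnP k n) => [lt_kn | le_nk]; first exact: part_of_parts.
  by rewrite part_ge ?f_small.
exists (ffun_of_parts f) => //; apply/partitionsP; split.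
  by move=> b a le_ab; rewrite !part_f; apply: f_nonincr.
rewrite (eq_bigr _ (fun k _ => part_f k)) -[RHS]f_sum (@sum_nat_zero_tail _ 0 n m) ?le_nm //.
by move=> k /andP[/f_small].
Qed.

End PaddedParts.

Definition lift_parts d r (f : nat -> nat) k := f k + (k <= d) * r.

Lemma lift_parts_nonincr d r f : {homo f : a b /~ a <= b} ->
  {homo lift_parts d r f : a b /~ a <= b}.
Proof.
move=> f_nonincr b a le_ab; apply: leq_add (f_nonincr _ _ le_ab) (leq_mul _ (leqnn r)).
by case/boolP: (b <= d) => // le_bd; rewrite (leq_trans le_ab le_bd).
Qed.

Lemma sum_lift_parts d r f n : d < n ->
  \sum_(0 <= k < n) lift_parts d r f k = \sum_(0 <= k < n) f k + d.+1 * r.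
Proof. by move=> lt_dn; rewrite big_split /= sum_nat_leq_const. Qed.

Section GapPartitions.
Variables (n d r : nat).
Hypothesis lt_dn : d < n.

Definition gap_partitions := [set l in partitions n | part l d.+1 + r <= part l d].

Lemma gap_partitions_eq0 : n < d.+1 * r -> gap_partitions = set0.
Proof.
move=> lt_n_dr; apply/setP => l; rewrite in_set0 inE.
apply/negbTE/andP => -[/partitionsP[l_nonincr l_sum] gap].
by have := mulS_leq_sum_nonincr l_nonincr lt_dn; rewrite l_sum; nia.
Qed.

Hypothesis le_dr_n : d.+1 * r <= n.
Local Notation N := (n - d.+1 * r).

Definition lift_partition (mu : {ffun 'I_N -> 'I_N.+1}) : {ffun 'I_n -> 'I_n.+1} :=
  ffun_of_parts n (lift_parts d r (part mu)).

Lemma part_lift_partition mu : part (lift_partition mu) =1 lift_parts d r (part mu).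
Proof.
move=> k; case: (ltnP k n) => [lt_kn | le_nk].
  by rewrite part_of_parts // /lift_parts; have := part_leq mu k; case: (k <= d); nia.
have le_Nk : N <= k := leq_trans (leq_subr _ _) le_nk.
by rewrite part_ge // /lift_parts (part_ge mu le_Nk) leqNgt (leq_trans lt_dn le_nk).
Qed.

Lemma lift_partition_inj : injective lift_partition.
Proof.
move=> mu1 mu2 eq12; apply: part_inj => k.
by have := part_lift_partition mu1 k; rewrite eq12 part_lift_partition => /addIn.
Qed.

Lemma lift_partition_gap mu : mu \in partitions N -> lift_partition mu \in gap_partitions.
Proof.
move=> /partitionsP[mu_nonincr mu_sum]; rewrite inE; apply/andP; split.
  apply/partitionsP; split.
    by move=> b a le_ab; rewrite !part_lift_partition; apply: lift_parts_nonincr.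
  rewrite (eq_bigr _ (fun k _ => part_lift_partition mu k)) sum_lift_parts //.
  rewrite (@sum_nat_zero_tail _ 0 N n) ?leq_subr ?mu_sum ?subnK // => k /andP[le_Nk _].
  by rewrite part_ge.
rewrite !part_lift_partition /lift_parts ltnn leqnn mul0n mul1n addn0 leq_add2r.
exact: mu_nonincr.
Qed.

Lemma gap_partitions_lift l : l \in gap_partitions ->
  exists2 mu, mu \in partitions N & l = lift_partition mu.
Proof.
rewrite inE => /andP[/partitionsP[l_nonincr l_sum] gap].
pose f k := part l k - (k <= d) * r.
have lift_f : lift_parts d r f =1 part l.
  move=> k; rewrite /lift_parts /f subnK //.
  case: (leqP k d) => [le_kd | _]; rewrite ?mul1n ?mul0n //.
  by have := l_nonincr _ _ le_kd; lia.
have f_nonincr : {homo f : a b /~ a <= b}.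
  move=> b a le_ab; have := l_nonincr _ _ le_ab; rewrite /f.
  case: (leqP b d) => [le_bd | lt_db].
    by rewrite (leq_trans le_ab le_bd) !mul1n => ?; apply: leq_sub2r.
  case: (leqP a d) => [le_ad | _]; rewrite ?mul1n !mul0n !subn0 //.
  by have := l_nonincr _ _ lt_db; have := l_nonincr _ _ le_ad; lia.
have f_sum : \sum_(0 <= k < n) f k = N.
  by have := @sum_lift_parts d r f n lt_dn; rewrite (eq_bigr _ (fun k _ => lift_f k)) l_sum; lia.
have f0 k : n <= k -> f k = 0.
  by move=> le_nk; rewrite /f part_ge // leqNgt (leq_trans lt_dn le_nk).
have [mu mu_part part_mu] := partitions_of_nonincr f_nonincr (leq_subr _ _) f0 f_sum.
exists mu => //; apply: part_inj => k.
by rewrite part_lift_partition -lift_f /lift_parts part_mu.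
Qed.

Lemma card_gap_partitions_lift : #|gap_partitions| = npart N.
Proof.
have -> : gap_partitions = lift_partition @: partitions N.
  apply/setP => l; apply/idP/imsetP => [/gap_partitions_lift // | [mu mu_part ->]].
  exact: lift_partition_gap.
by rewrite card_in_imset // => mu1 mu2 _ _; apply: lift_partition_inj.
Qed.

End GapPartitions.

Lemma card_gap_partitions n d r : d < n ->
  #|gap_partitions n d r| = (d.+1 * r <= n) * npart (n - d.+1 * r).
Proof.
move=> lt_dn; case: leqP => [le_dr_n | lt_n_dr].
  by rewrite mul1n card_gap_partitions_lift.
by rewrite gap_partitions_eq0 ?cards0.
Qed.

Lemma sum_gap_partitions n d : d < n ->
  \sum_(l in partitions n) (part l d - part l d.+1) =
  \sum_(1 <= r < n.+1) (d.+1 * r <= n) * npart (n - d.+1 * r).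
Proof.
move=> lt_dn.
transitivity (\sum_(l in partitions n) \sum_(1 <= r < n.+1) (part l d.+1 + r <= part l d : nat)).
  apply: eq_bigr => l /partitionsP[l_nonincr _].
  rewrite -(sum_nat_leq_indicator (leq_trans (leq_subr _ _) (part_leq l d))).
  by apply: eq_bigr => r _; rewrite leq_subRL // l_nonincr.
rewrite exchange_big; apply: eq_big_nat => r _.
rewrite -card_gap_partitions // -sum1_card big_mkcond [RHS]big_mkcond.
by apply: eq_bigr => l _; rewrite [l \in gap_partitions _ _ _]inE; case: (l \in _); case: (_ <= _).
Qed.

Lemma dvdn_sum_indicator d k n : 0 < k <= n ->
  (d.+1 %| k : nat) = \sum_(1 <= r < n.+1) (d.+1 * r == k).
Proof.
case/andP=> k_gt0 le_kn; have [/dvdnP[q def_k] | ndvd] := boolP (d.+1 %| k).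
  rewrite def_k in k_gt0 le_kn *; rewrite muln_gt0 andbT in k_gt0.
  under eq_bigr => r _ do rewrite mulnC eqn_pmul2r // -[nat_of_bool _]muln1.
  by rewrite sum_nat_eq_indicator k_gt0 ltnS (leq_trans _ le_kn) // leq_pmulr.
rewrite big1 // => r _; apply/eqP; rewrite eqb0; apply: contra ndvd => /eqP <-.
exact: dvdn_mulr.
Qed.

Lemma sum_mul_leq_dvd (F : nat -> nat) n d :
  \sum_(1 <= r < n.+1) (d.+1 * r <= n) * F (d.+1 * r) =
  \sum_(1 <= k < n.+1) (d.+1 %| k) * F k.
Proof.
transitivity (\sum_(1 <= k < n.+1) \sum_(1 <= r < n.+1) (d.+1 * r == k) * F k).
  rewrite exchange_big; apply: eq_big_nat => r /andP[r_gt0 _].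
  under eq_bigr => k _ do rewrite eq_sym.
  by rewrite sum_nat_eq_indicator ltnS muln_gt0 r_gt0.
by apply: eq_big_nat => k kP; rewrite -big_distrl /= -dvdn_sum_indicator.
Qed.

Lemma sum_part_partitions n j : j < n ->
  \sum_(l in partitions n) part l j =
  \sum_(j <= d < n) \sum_(1 <= k < n.+1) (d.+1 %| k) * npart (n - k).
Proof.
move=> lt_jn.
transitivity (\sum_(l in partitions n) \sum_(j <= d < n) (part l d - part l d.+1)).
  apply: eq_bigr => l /partitionsP[l_nonincr _].
  by rewrite (telescope_sumn_nonincr l_nonincr (ltnW lt_jn)) (part_ge l (leqnn n)) subn0.
rewrite exchange_big; apply: eq_big_nat => d /andP[_ lt_dn].
by rewrite sum_gap_partitions // (sum_mul_leq_dvd (fun k => npart (n - k))).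
Qed.

Lemma sum_residue_indicator m i d : 0 < i <= m ->
  \sum_(0 <= j < d) (j.+1 == i %[mod m]) = (d + m - i) %/ m.
Proof.
case/andP=> i_gt0 le_im; have m_gt0 : 0 < m by apply: leq_trans le_im.
elim: d => [|d IHd]; first by rewrite big_geq // divn_small //; lia.
rewrite big_nat_recr //= IHd.
have -> : d.+1 + m - i = (d + m - i).+1 by lia.
rewrite divnS // addnC -(eqn_modDr (m - i)) subnKC // modnn.
by have -> : d.+1 + (m - i) = (d + m - i).+1 by lia.
Qed.

Lemma exchange_big_nat_triangle (F : nat -> nat -> nat) n :
  \sum_(0 <= j < n) \sum_(j <= d < n) F j d =
  \sum_(0 <= d < n) \sum_(0 <= j < d.+1) F j d.
Proof.
transitivity (\sum_(0 <= j < n) \sum_(0 <= d < n) (j <= d) * F j d).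
  apply: eq_big_nat => j _; rewrite (big_nat_widenl _ _ _ _ _ (leq0n j)) big_mkcond.
  by apply: eq_bigr => d _; case: (j <= d); rewrite ?mul1n.
rewrite exchange_big; apply: eq_big_nat => d /andP[_ lt_dn].
rewrite (big_nat_widen _ _ _ _ _ lt_dn) [RHS]big_mkcond.
by apply: eq_bigr => j _; rewrite ltnS; case: (j <= d); rewrite ?mul1n.
Qed.

Lemma sum_dvdn_shift (F : nat -> nat) n k : 0 < k <= n ->
  \sum_(0 <= d < n) (d.+1 %| k) * F d.+1 = \sum_(1 <= d < k.+1 | d %| k) F d.
Proof.
case/andP=> k_gt0 le_kn; rewrite big_add1 /= (big_nat_widen _ _ _ _ _ le_kn) [RHS]big_mkcond.
apply: eq_bigr => d _; have [dvd | _] := boolP (d.+1 %| k); rewrite ?mul1n ?mul0n //=.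
by rewrite (dvdn_leq k_gt0 dvd).
Qed.

Theorem mainTheorem8 (m i n : nat) (hm : 1 <= m) (hi1 : 1 <= i) (him : i <= m) :
  \sum_(l in partitions n) Xmi m i l =
  \sum_(1 <= k < n.+1) npart (n - k) *
     \sum_(1 <= d < k.+1 | d %| k) ((d + m - i) %/ m).
Proof.
have iP : 0 < i <= m by rewrite hi1 him.
pose G d := \sum_(1 <= k < n.+1) (d.+1 %| k) * npart (n - k).
transitivity (\sum_(0 <= j < n) \sum_(j <= d < n) (j.+1 == i %[mod m]) * G d).
  rewrite /Xmi exchange_big /= big_mkcond [RHS]big_mkord; apply: eq_bigr => j _.
  rewrite (eq_bigr (fun l => part l j)) => [|l _]; last by rewrite part_ord.
  rewrite sum_part_partitions // -big_distrr /=.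
  by case: (_ == _); rewrite ?mul1n ?mul0n.
rewrite exchange_big_nat_triangle.
under eq_big_nat => d _ do rewrite -big_distrl /= sum_residue_indicator // big_distrr.
rewrite exchange_big; apply: eq_big_nat => k /andP[k_gt0 le_kn].
rewrite -(@sum_dvdn_shift (fun d => (d + m - i) %/ m) n) ?k_gt0 // big_distrr.
by apply: eq_bigr => d _ /=; rewrite mulnC mulnAC mulnC.
Qed.
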